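(* Let $m\geq1$ and let $\{\Lambda_i\}_{i\geq1}$ be an infinite collection of proper lattices in $\mathbb{Z}^m$. Put $\mathcal{M}_\mathscr{B}=\bigcup_{i\geq1}\Lambda_i$, $\mathcal{F}_\mathscr{B}=\mathbb{Z}^m\setminus\mathcal{M}_\mathscr{B}$, $\eta=\mathbb{1}_{\mathcal{F}_\mathscr{B}}\in\{0,1\}^{\mathbb{Z}^m}$ and let $X_\eta$ be its orbit closure. Consider: (a) $(X_\eta,(S_{\mathbf{n}})_{\mathbf{n}\in\mathbb{Z}^m})$ is proximal; (b) $\mathbf{0}\in X_\eta$, where $\mathbf{0}_{\mathbf{n}}=0$ for all $\mathbf{n}$; (c) for any $k\geq1$ and any lattices $\widetilde\Lambda_1,\dots,\widetilde\Lambda_k$ in $\mathbb{Z}^m$ with $\bigcup_{j=1}^k\widetilde\Lambda_j\neq\mathbb{Z}^m$, we have $\mathcal{M}_\mathscr{B}\not\subseteq\bigcup_{j=1}^k\widetilde\Lambda_j$; (d) $\{\Lambda_i\}_{i\geq1}$ contains an infinite pairwise coprime subset; (e) for any $\mathbf{n}\in\mathbb{Z}^m$ and any lattice $\Lambda\subseteq\mathbb{Z}^m$, $\mathbf{n}+\Lambda\not\subseteq\mathcal{F}_\mathscr{B}$; (f) $d^*(\mathcal{M}_\mathscr{B})=1$. Then (d) implies (a), and (a), (b), (c), (e), (f) are pairwise equivalent.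
   Context: A lattice in $\mathbb{Z}^m$ is a subgroup of finite index. The shift is $(S_{\mathbf{n}}x)_{\mathbf{g}}=x_{\mathbf{g}+\mathbf{n}}$ on $\{0,1\}^{\mathbb{Z}^m}$ with the product topology; $X_\eta$ is the closure of the orbit of $\eta$. A system is proximal if every pair of its points $(x,y)$ satisfies $\liminf_{\mathbf{n}\to\infty}D(S_{\mathbf{n}}x,S_{\mathbf{n}}y)=0$ for a compatible metric $D$. Proper subgroups $\Lambda,\Lambda'$ are coprime if $\Lambda+\Lambda'=\mathbb{Z}^m$. Upper Banach density: $d^*(A)=\sup\{\limsup_n |A\cap F_n|/|F_n|\}$ over all Følner sequences $(F_n)$ in $\mathbb{Z}^m$ (finite sets with $|(F_n+g)\cap F_n|/|F_n|\to1$ for every $g$). *)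

From Stdlib Require Import Reals ClassicalEpsilon.
From HB Require Import structures.
From mathcomp Require Import all_boot all_order all_algebra.
Set Implicit Arguments. Unset Strict Implicit. Unset Printing Implicit Defensive.
Import GRing.Theory.
Local Open Scope ring_scope.

Notation Zm m := ('rV[int]_m).

Definition pbool (P : Prop) : bool :=
  if excluded_middle_informative P then true else false.

Definition is_subgroup m (L : Zm m -> Prop) : Prop :=
  L 0 /\ forall x y, L x -> L y -> L (x - y).

Definition is_lattice m (L : Zm m -> Prop) : Prop :=
  is_subgroup L /\
  exists s : seq (Zm m), forall x, exists2 r, r \in s & L (x - r).

Definition proper_lattice m (L : Zm m -> Prop) : Prop :=
  is_lattice L /\ exists x, ~ L x.

Definition coprime_lat m (L L' : Zm m -> Prop) : Prop :=
  forall x, exists a b, L a /\ L' b /\ x = a + b.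

Definition shift m (n : Zm m) (x : Zm m -> bool) : Zm m -> bool :=
  fun g => x (g + n).

(* x lies in the closure (product topology) of the orbit of eta:
   every cylinder neighbourhood of x meets the orbit *)
Definition orbit_closure m (eta : Zm m -> bool) (x : Zm m -> bool) : Prop :=
  forall W : seq (Zm m), exists n, forall g, g \in W -> x g = shift n eta g.

(* liminf_{n -> oo} D(S_n x, S_n y) = 0 for a compatible metric D, i.e. for
   every basic neighbourhood of the diagonal (agreement on a finite window W)
   and every finite set K, some n outside K has S_n x, S_n y agreeing on W *)
Definition proximal_pair m (x y : Zm m -> bool) : Prop :=
  forall W K : seq (Zm m), exists n, n \notin K /\
    forall g, g \in W -> shift n x g = shift n y g.

Definition proximal m (X : (Zm m -> bool) -> Prop) : Prop :=
  forall x y, X x -> X y -> proximal_pair x y.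

(* Folner sequences of finite (nonempty) sets, represented by duplicate-free
   sequences: |(F_n + g) :&: F_n| / |F_n| -> 1 for every g *)
Definition Folner m (F : nat -> seq (Zm m)) : Prop :=
  (forall n, uniq (F n) /\ (0 < size (F n))%N) /\
  forall g : Zm m,
    Un_cv (fun n => Rdiv (INR (count (fun x => (x - g) \in F n) (F n)))
                         (INR (size (F n)))) (IZR 1).

Definition density_ratio m (A : Zm m -> Prop) (F : nat -> seq (Zm m)) (n : nat) : R :=
  Rdiv (INR (count (fun x => pbool (A x)) (F n))) (INR (size (F n))).

Definition is_limsup (u : nat -> R) (l : R) : Prop :=
  (forall eps, Rlt (IZR 0) eps -> exists N, forall n, (N <= n)%N -> Rlt (u n) (Rplus l eps)) /\
  (forall eps, Rlt (IZR 0) eps -> forall N, exists n, (N <= n)%N /\ Rlt (Rminus l eps) (u n)).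

Definition upper_banach_density m (A : Zm m -> Prop) (d : R) : Prop :=
  is_lub (fun l => exists F, Folner F /\ is_limsup (density_ratio A F) l) d.

(* Every condition is compared with (e), "no coset of a lattice lies in the free set".
   Iterating (e), for a finite window [W] and a coset [c + L0] there is a point [n] of the
   coset and a sublattice [L] of [L0] with [n + L + W] inside [M_B]: one more [Lam_i] is
   intersected for each point of [W].  This puts [0] in [X_eta], makes two shifts of [eta]
   vanish simultaneously on a window far away (refine the sublattice over all cosets of
   [L0] first), and yields boxes of any size inside [M_B], hence density 1.  Conversely a
   free coset [n + L] keeps [eta] equal to 1 on a translate of [L] in every window, misses
   the finitely many lattices [L + Z r] that cover [M_B], and fills a proportion
   [1 / (2 [Z^m : L])] of any almost invariant finite set.  Under (d), two of the sets
   [Lam_i + L] coincide by pigeonhole, and their coprime sum is all of [Z^m]. *)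

From Stdlib Require Import Reals ClassicalEpsilon Lra FunctionalExtensionality.
From HB Require Import structures.
From mathcomp Require Import all_boot all_order all_algebra zify ring.
Import GRing.Theory.
Local Open Scope ring_scope.
Set Implicit Arguments. Unset Strict Implicit. Unset Printing Implicit Defensive.

Section RatioBounds.
Local Open Scope R_scope.

Lemma Rdiv_mulK (x y : R) : y <> 0 -> x / y * y = x.
Proof. by move=> hy; rewrite /Rdiv Rmult_assoc Rinv_l // Rmult_1_r. Qed.

Lemma ratio_le1 (c s : nat) : (0 < s)%N -> (c <= s)%N -> INR c / INR s <= 1.
Proof.
move=> /ltP/lt_INR /= hs /leP/le_INR hc.
have := Rdiv_mulK (INR c) (Rgt_not_eq _ _ hs); nra.
Qed.

Lemma ratio_cvg1 (c S : nat -> nat) (C : nat) :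
  (forall k, 0 < S k)%N -> (forall k, c k <= S k)%N ->
  (forall k, k.+1 * (S k - c k) <= C * S k)%N ->
  Un_cv (fun k => INR (c k) / INR (S k)) 1.
Proof.
move=> hS hc hb eps heps.
have [N hN] := INR_unbounded (INR C / eps).
exists N => k /leP hk; rewrite /Rdist.
have /lt_INR /= hSk := ltP (hS k).
have /le_INR hck := leP (hc k).
have /le_INR hkN := leP hk.
have /le_INR := leP (hb k).
rewrite !mult_INR minus_INR ?S_INR; last exact/leP.
set q := INR (c k) / INR (S k) => hbk.
have eq : q * INR (S k) = INR (c k) by apply: Rdiv_mulK; lra.
have hC : INR C < eps * (INR k + 1).
  have := Rdiv_mulK (INR C) (Rgt_not_eq _ _ heps); nra.
have hk0 := pos_INR k.
have h1 : (INR k + 1) * (INR (S k) - INR (c k)) < (INR k + 1) * (eps * INR (S k)).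
  nra.
have h2 : INR (S k) - INR (c k) < eps * INR (S k) by nra.
rewrite Rabs_left1; nra.
Qed.

Lemma deficit_lt_of_ratio_close (c S N : nat) : (0 < S)%N -> (0 < N)%N ->
  (c <= S)%N -> Rdist (INR c / INR S) 1 < / (2 * INR N) -> (2 * N * (S - c) < S)%N.
Proof.
move=> /ltP/lt_INR /= hS /ltP/lt_INR /= hN hc.
have /le_INR hc' := leP hc.
set q := INR c / INR S.
have eq : q * INR S = INR c by apply: Rdiv_mulK; lra.
have hinv : / (2 * INR N) * (2 * INR N) = 1 by apply: Rinv_l; lra.
rewrite /Rdist Rabs_left1; last by nra.
move=> h; apply/ltP/INR_lt; rewrite !mult_INR minus_INR /=; last exact/leP.
have h1 : 2 * INR N * (1 - q) < 1 by nra.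
nra.
Qed.

Lemma ratio_le_of_deficit (c S N : nat) : (0 < S)%N -> (0 < N)%N ->
  (2 * N * c + S <= 2 * N * S)%N -> INR c / INR S <= 1 - / (2 * INR N).
Proof.
move=> /ltP/lt_INR /= hS /ltP/lt_INR /= hN /leP/le_INR.
rewrite !plus_INR !mult_INR /= => h.
set q := INR c / INR S.
have eq : q * INR S = INR c by apply: Rdiv_mulK; lra.
rewrite -eq in h.
have h1 : 2 * INR N * q + 1 <= 2 * INR N by nra.
have hinv : / (2 * INR N) * (2 * INR N) = 1 by apply: Rinv_l; lra.
nra.
Qed.

End RatioBounds.

Lemma pboolT (P : Prop) : pbool P = true <-> P.
Proof. by rewrite /pbool; case: excluded_middle_informative. Qed.

Lemma pboolF (P : Prop) : pbool P = false <-> ~ P.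
Proof. by rewrite /pbool; case: excluded_middle_informative. Qed.

Ltac zmodule_eq := apply/rowP => ?; rewrite ?mxE; ring.

Section Lattices.
Variable m : nat.
Implicit Types (L M : Zm m -> Prop) (x y : Zm m).

Lemma subgroup0 L : is_subgroup L -> L 0.
Proof. by case. Qed.

Lemma subgroupB L x y : is_subgroup L -> L x -> L y -> L (x - y).
Proof. by case=> _; apply. Qed.

Lemma subgroupN L x : is_subgroup L -> L x -> L (- x).
Proof. by move=> hL hx; rewrite -sub0r; apply: subgroupB => //; apply: subgroup0. Qed.

Lemma subgroupD L x y : is_subgroup L -> L x -> L y -> L (x + y).
Proof. by move=> hL hx hy; rewrite -[y]opprK; apply: subgroupB => //; apply: subgroupN. Qed.

Lemma subgroupMz L x (z : int) : is_subgroup L -> L x -> L (x *~ z).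
Proof.
move=> hL hx; have hn (n : nat) : L (x *~ n).
  elim: n => [|n IH]; first by rewrite mulr0z; apply: subgroup0.
  by rewrite intS mulrzDr mulr1z; apply: subgroupD.
by case: z => n; rewrite ?NegzE ?mulrNz; [|apply: subgroupN].
Qed.

Lemma lattice_subgroup L : is_lattice L -> is_subgroup L.
Proof. by case. Qed.

Lemma lattice_ext L M : (forall x, L x <-> M x) -> is_lattice L -> is_lattice M.
Proof.
move=> hLM [[h0 hB] [s hs]]; split; first split.
- exact/hLM.
- by move=> x y /hLM hx /hLM hy; apply/hLM; apply: hB.
- by exists s => x; have [r rs /hLM hr] := hs x; exists r.
Qed.

Lemma lattice_setT : is_lattice (fun _ : Zm m => True).
Proof. by split; [split|exists [:: 0] => x; exists 0; rewrite ?inE]. Qed.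

Lemma lattice_setI L M : is_lattice L -> is_lattice M ->
  is_lattice (fun x => L x /\ M x).
Proof.
case=> hL [s hs] [hM [t ht]]; split.
  split; first by split; apply: subgroup0.
  by move=> x y [? ?] [? ?]; split; apply: subgroupB.
pose rep r r' := epsilon (inhabits 0) (fun x => L (x - r) /\ M (x - r')).
exists [seq rep r r' | r <- s, r' <- t] => x.
have [r rs hr] := hs x; have [r' rt hr'] := ht x.
have [hy1 hy2] : L (rep r r' - r) /\ M (rep r r' - r').
  exact: (epsilon_spec _ (fun y => L (y - r) /\ M (y - r')) (ex_intro _ x (conj hr hr'))).
exists (rep r r'); first by apply/allpairsP; exists (r, r').
have diff c : x - rep r r' = (x - c) - (rep r r' - c) by rewrite opprB addrA subrK.
by split; [rewrite (diff r) | rewrite (diff r')]; apply: subgroupB.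
Qed.

Lemma lattice_bigcap k (L : 'I_k -> Zm m -> Prop) : (forall j, is_lattice (L j)) ->
  is_lattice (fun x => forall j, L j x).
Proof.
move=> hL.
have hs (s : seq 'I_k) : is_lattice (fun x => forall j, j \in s -> L j x).
  elim: s => [|j s IH]; first by apply: lattice_ext lattice_setT.
  apply: lattice_ext (lattice_setI (hL j) IH) => x; split.
    by case=> hj hs i; rewrite inE => /predU1P [->|/hs].
  by move=> h; split => [|i hi]; apply: h; rewrite inE ?eqxx ?hi ?orbT.
apply: lattice_ext (hs (enum 'I_k)) => x.
by split=> h j => [|_]; apply: h; rewrite mem_enum.
Qed.

Definition cyclic_join (g : Zm m) L x := exists (z : int) l, L l /\ x = g *~ z + l.

Lemma lattice_cyclic_join g L : is_lattice L -> is_lattice (cyclic_join g L).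
Proof.
case=> hL [s hs]; split.
  split; first by exists 0, 0; split; [apply: subgroup0 | rewrite mulr0z addr0].
  move=> x y [z1 [l1 [h1 ->]]] [z2 [l2 [h2 ->]]].
  exists (z1 - z2), (l1 - l2); split; first exact: subgroupB.
  by rewrite mulrzBr; zmodule_eq.
exists s => x; have [r rs hr] := hs x; exists r => //.
by exists 0, (x - r); rewrite mulr0z add0r.
Qed.

End Lattices.

Lemma exists_shift_avoiding m (K R : seq (Zm m)) : (1 <= m)%N ->
  exists v : Zm m, forall r, r \in R -> v - r \notin K.
Proof.
move=> hm; pose i0 : 'I_m := Ordinal hm.
pose B := (\max_(k <- K) `|k ord0 i0| + \max_(r <- R) `|r ord0 i0|).+1%N.
exists (const_mx B%:Z) => r rR; apply/negP => hK.
have hk := leq_bigmax_seq (P := xpredT) (F := fun k : Zm m => `|k ord0 i0|%N) _ hK isT.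
have hr := leq_bigmax_seq (P := xpredT) (F := fun k : Zm m => `|k ord0 i0|%N) _ rR isT.
move: hk hr; rewrite /B !mxE /=.
set a := \max_(k <- K) _; set b := \max_(k <- R) _; lia.
Qed.

Section FreeSet.
Variables (m : nat) (Lam : nat -> Zm m -> Prop).

Definition multiples (x : Zm m) := exists i, Lam i x.

Definition free_indicator (g : Zm m) := pbool (~ multiples g).

Definition no_free_coset := forall (n : Zm m) (L : Zm m -> Prop),
  is_lattice L -> ~ (forall l, L l -> ~ multiples (n + l)).

Definition uncoverable_by_lattices := forall k (L : 'I_k -> Zm m -> Prop),
  (1 <= k)%N -> (forall j, is_lattice (L j)) -> (exists x, forall j, ~ L j x) ->
  ~ (forall x, multiples x -> exists j, L j x).

Definition has_coprime_subfamily := exists phi : nat -> nat, injective phi /\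
  forall i j, i <> j -> coprime_lat (Lam (phi i)) (Lam (phi j)).

Lemma free_indicatorF g : multiples g -> free_indicator g = false.
Proof. by move=> h; apply/pboolF. Qed.

Hypothesis Lam_lattice : forall i, is_lattice (Lam i).

Section NoFreeCoset.
Hypothesis no_free : no_free_coset.

(* Each step intersects with one more [Lam i]: the coset [n + w + L] meets [multiples],
   say at [n + w + l0] in [Lam i], and then all of [n + w + l0 + (L :&: Lam i)] does. *)
Lemma sublattice_window_multiples (W : seq (Zm m)) c L0 : is_lattice L0 ->
  exists n L, L0 (n - c) /\ is_lattice L /\ (forall l, L l -> L0 l) /\
    forall l w, L l -> w \in W -> multiples (n + l + w).
Proof.
move=> hL0; elim: W => [|w W [n [L [hn [hL [hLL0 hW]]]]]].
  exists c, L0; rewrite subrr; split; first exact: subgroup0 (lattice_subgroup hL0).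
  by split => //; split.
have [l0 [hl0 [i hi]]] : exists l0, L l0 /\ multiples (n + w + l0).
  by apply: NNPP => hn'; apply: (@no_free (n + w) L hL) => l hl hM; apply: hn'; exists l.
have hLi := lattice_subgroup (Lam_lattice i).
have hLs := lattice_subgroup hL.
exists (n + l0), (fun x => L x /\ Lam i x); split.
  by rewrite addrAC; apply: subgroupD; [apply: lattice_subgroup | | apply: hLL0].
split; first exact: lattice_setI.
split; first by move=> l [/hLL0].
move=> l w' [hl hli]; rewrite inE => /predU1P [->|hw].
  by exists i; rewrite addrAC [n + l0 + w]addrAC; apply: subgroupD.
by rewrite -[n + l0 + l]addrA; apply: hW => //; apply: subgroupD.
Qed.

Lemma window_multiples (W : seq (Zm m)) :
  exists n, forall w, w \in W -> multiples (n + w).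
Proof.
have [n [L [_ [hL [_ hW]]]]] := sublattice_window_multiples W 0 (lattice_setT m).
exists n => w hw; rewrite -[n]addr0; apply: hW => //.
exact: subgroup0 (lattice_subgroup hL).
Qed.

Lemma common_sublattice_window_multiples (W : seq (Zm m)) n0 L0 (s : seq (Zm m)) :
  is_lattice L0 -> exists L, is_lattice L /\ (forall l, L l -> L0 l) /\
    forall r, r \in s -> exists n, L0 (n - (n0 + r)) /\
      forall l w, L l -> w \in W -> multiples (n + l + w).
Proof.
move=> hL0; elim: s => [|r s [L [hL [hLL0 hs]]]]; first by exists L0.
have [n [Lr [hn [hLr [hLrL0 hW]]]]] := sublattice_window_multiples W (n0 + r) hL0.
exists (fun x => L x /\ Lr x); split; first exact: lattice_setI.
split; first by move=> l [/hLL0].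
move=> r'; rewrite inE => /predU1P [->|/hs [n' [hn' hW']]].
  by exists n; split => // l w [_ hl]; apply: hW.
by exists n'; split => // l w [hl _]; apply: hW'.
Qed.

(* [v - Rs] meets every coset of [Ls]; take [t] there with [t + s1] in [n_r + Ls], where
   [n_r] is in the [L0]-coset of [n0 + (s1 - s2)], so that also [t + s2] is in [n0 + L0].
   [v] is taken far away to avoid [K]. *)
Lemma shifts_into_multiples (W K : seq (Zm m)) : (1 <= m)%N ->
  exists T : seq (Zm m), (forall t, t \in T -> t \notin K) /\
    forall s1 s2, exists2 t, t \in T & forall w, w \in W ->
      multiples (w + t + s1) /\ multiples (w + t + s2).
Proof.
move=> hm.
have [n0 [L0 [_ [hL0 [_ hW0]]]]] := sublattice_window_multiples W 0 (lattice_setT m).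
have [_ [R0 hR0]] := hL0.
have [Ls [hLs [hLsL0 hst]]] := common_sublattice_window_multiples W n0 R0 hL0.
have [_ [Rs hRs]] := hLs.
have [v hv] := exists_shift_avoiding K Rs hm.
exists [seq v - r | r <- Rs]; split; first by move=> t /mapP [r rR ->]; apply: hv.
move=> s1 s2.
have [r0 r0R hr0] := hR0 (s1 - s2).
have [nr [hnr hWr]] := hst r0 r0R.
have [r rR hr] := hRs (v - (nr - s1)).
exists (v - r); first exact: map_f.
have hl : Ls (v - r - (nr - s1)) by rewrite addrAC.
move=> w hw; split.
  have := hWr _ w hl hw.
  by have -> : nr + (v - r - (nr - s1)) + w = w + (v - r) + s1 by zmodule_eq.
have hL0s := lattice_subgroup hL0.
have := hW0 ((nr - (n0 + r0)) - ((s1 - s2) - r0) + (v - r - (nr - s1))) w.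
have -> : n0 + (nr - (n0 + r0) - (s1 - s2 - r0) + (v - r - (nr - s1))) + w
  = w + (v - r) + s2 by zmodule_eq.
apply=> //; apply: subgroupD => //; last exact: hLsL0.
exact: subgroupB.
Qed.

Lemma no_free_coset_proximal : (1 <= m)%N -> proximal (orbit_closure free_indicator).
Proof.
move=> hm x y hx hy W K.
have [T [hTK hT]] := shifts_into_multiples W K hm.
pose V := [seq t + w | t <- T, w <- W].
have [s1 hs1] := hx V; have [s2 hs2] := hy V.
have [t tT ht] := hT s1 s2.
exists t; split; first exact: hTK.
move=> w hw; have hV : w + t \in V by rewrite addrC; apply/allpairsP; exists (t, w).
have [h1 h2] := ht w hw.
by rewrite /shift (hs1 _ hV) (hs2 _ hV) /shift !free_indicatorF.
Qed.

End NoFreeCoset.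

(* As [eta] is 0 on [Lam 0] and 1 on the free coset [n + L], [eta] and its shift by [n]
   differ in every window containing representatives of all cosets of [L :&: Lam 0]. *)
Lemma proximal_no_free_coset :
  proximal (orbit_closure free_indicator) -> no_free_coset.
Proof.
move=> hprox n L hL hfree.
have [hLs [s hs]] := lattice_setI hL (Lam_lattice 0).
have heta : orbit_closure free_indicator free_indicator.
  by move=> W; exists 0 => g _; rewrite /shift addr0.
have hshift : orbit_closure free_indicator (shift n free_indicator) by exists n.
have [t [_ ht]] := hprox _ _ heta hshift [seq - r | r <- s] [::].
have [r rs [hr hr0]] := hs t.
have := ht (- r); rewrite map_f // /shift => /(_ isT).
rewrite free_indicatorF; last by exists 0%N; rewrite addrC.
move/esym/pboolF; apply; rewrite addrC [- r + _]addrC; exact: hfree.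
Qed.

Lemma orbit_closure_zeroP :
  orbit_closure free_indicator (fun _ => false) <-> no_free_coset.
Proof.
split=> [hzero n L [hL [s hs]] hfree | no_free W].
  have [t ht] := hzero [seq - r | r <- s].
  have [r rs hr] := hs (t - n).
  have := ht (- r); rewrite map_f // /shift => /(_ isT) /esym /pboolF /NNPP.
  have -> : - r + t = n + (t - n - r) by zmodule_eq.
  exact: hfree.
have [n hn] := window_multiples no_free W.
by exists n => g hg; rewrite /shift free_indicatorF // addrC; apply: hn.
Qed.

Lemma cyclic_join_free_coset n L g : is_lattice L ->
  (forall l, L l -> ~ multiples (n + l)) -> (exists2 y, multiples y & L (y - g)) ->
  ~ cyclic_join g L n.
Proof.
move=> hL hfree [y [i hi] hy] [z [l [hl en]]].
have hLs := lattice_subgroup hL.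
apply: (hfree ((y - g) *~ z - l)); first by apply: subgroupB => //; apply: subgroupMz.
exists i; have -> : n + ((y - g) *~ z - l) = y *~ z by rewrite en mulrzBl; zmodule_eq.
exact: subgroupMz (lattice_subgroup (Lam_lattice i)) hi.
Qed.

(* A free coset [n + L] is avoided by the lattices [L + Z r], [r] running over the
   representatives of the [L]-cosets that meet [multiples], and these cover [multiples]. *)
Lemma uncoverable_by_latticesP : uncoverable_by_lattices <-> no_free_coset.
Proof.
split=> [hunc n L hL hfree | no_free k L _ hL [x0 hx0] hcov]; last first.
  apply: (no_free x0 _ (lattice_bigcap hL)) => l hl hM.
  have [j hj] := hcov _ hM; apply: (hx0 j).
  by rewrite -(addrK l x0); apply: subgroupB => //; apply: lattice_subgroup.
have [hLs [s hs]] := hL.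
have s_gt0 : (0 < size s)%N by have [r] := hs 0; case: (s).
pose g j := if pbool (exists2 y, multiples y & L (y - nth 0 s j)) then nth 0 s j else 0.
apply: (hunc (size s) (fun j : 'I_(size s) => cyclic_join (g j) L) s_gt0).
- by move=> j; apply: lattice_cyclic_join.
- exists n => j; apply: cyclic_join_free_coset => //.
  rewrite /g; case: pbool (pboolT (exists2 y, multiples y & L (y - nth 0 s j))).
    by case=> /(_ erefl).
  exists 0; last by rewrite subrr; apply: subgroup0.
  by exists 0%N; apply: subgroup0 (lattice_subgroup (Lam_lattice 0)).
- move=> x hx; have [r rs hr] := hs x.
  have hj : (index r s < size s)%N by rewrite index_mem.
  exists (Ordinal hj); rewrite /g /= nth_index //.
  case: pbool (pboolF (exists2 y, multiples y & L (y - r))) => [_|[h _]].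
    by exists 1, (x - r); rewrite mulr1z subrKC.
  by exfalso; apply: h => //; exists x.
Qed.

End FreeSet.

Lemma exists_agreeing_pair (T : eqType) (P : nat -> T -> Prop) (s : seq T) :
  exists i j, i <> j /\ forall r, r \in s -> (P i r <-> P j r).
Proof.
pose f (i : 'I_(2 ^ size s).+1) := map_tuple (fun r => pbool (P i r)) (in_tuple s).
have /injectivePn [i [j /eqP hij hf]] : ~~ injectiveb f.
  apply/negP => /injectiveP /leq_card.
  by rewrite card_ord card_tuple card_bool ltnn.
exists i, j; split; first by move=> /val_inj/hij.
move=> r rs; have := congr1 val hf => /= /eq_in_map /(_ r rs) e.
by split => /pboolT h; apply/pboolT; [rewrite -e | rewrite e].
Qed.

Section CoprimeSubfamily.
Variables (m : nat) (Lam : nat -> Zm m -> Prop).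
Hypothesis Lam_lattice : forall i, is_lattice (Lam i).

(* Pigeonhole on the cosets of [L] gives [i <> j] with [Lam (phi i) + L = Lam (phi j) + L].
   Coprimality writes [n = a + b] with [a] in [Lam (phi i)] and [b] in [Lam (phi j)]; as [b]
   also lies in [Lam (phi i) + L], the coset [n + L] meets [Lam (phi i)]. *)
Lemma coprime_subfamily_no_free_coset : has_coprime_subfamily Lam -> no_free_coset Lam.
Proof.
move=> [phi [_ hcop]] n L hL hfree.
have [hLs [s hs]] := hL.
pose M i x := exists a l, Lam (phi i) a /\ L l /\ x = a + l.
have [i [j [hij hM]]] := exists_agreeing_pair M s.
have [a [b [ha [hb en]]]] := hcop _ _ hij n.
have [r rs hr] := hs b.
have [a' [l' [ha' [hl' er]]]] : M i r.
  by apply/hM => //; exists b, (- (b - r)); do 2 split => //; [apply: subgroupN | zmodule_eq].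
apply: (hfree (- (l' + (b - r)))); first by apply: subgroupN => //; apply: subgroupD.
exists (phi i); have -> : n + - (l' + (b - r)) = a + a' by rewrite en er; zmodule_eq.
exact: subgroupD (lattice_subgroup (Lam_lattice (phi i))) ha ha'.
Qed.

End CoprimeSubfamily.

Lemma leq_sum_mem (T : eqType) (f : T -> nat) x s :
  x \in s -> (f x <= \sum_(y <- s) f y)%N.
Proof.
elim: s => // y s IH; rewrite inE big_cons => /predU1P [->|/IH h].
  exact: leq_addr.
exact: leq_trans h (leq_addl _ _).
Qed.

Lemma count_le_sum_cover (T I : eqType) (a : pred T) (b : I -> pred T) (s : seq I) F :
  (forall x, x \in F -> a x -> exists2 i, i \in s & b i x) ->
  (count a F <= \sum_(i <- s) count (b i) F)%N.
Proof.
elim: F => [|x F IH] h; first by rewrite big1_seq.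
rewrite /= big_split /=; apply: leq_add; last first.
  by apply: IH => y hy; apply: h; rewrite inE hy orbT.
case ha: (a x) => //; have [i hi hb] := h x (mem_head _ _) ha.
by apply: leq_trans (leq_sum_mem _ hi); rewrite hb.
Qed.

Lemma card_ffun_coord m k (i : 'I_m) (P : pred 'I_k.+1) :
  #|[pred f : {ffun 'I_m -> 'I_k.+1} | P (f i)]| = (#|P| * k.+1 ^ m.-1)%N.
Proof.
pose F j := if j == i then P else predT.
have -> : #|[pred f : {ffun 'I_m -> 'I_k.+1} | P (f i)]| =
    #|(family F : simpl_pred {ffun 'I_m -> 'I_k.+1})|.
  apply: eq_card => f; rewrite !inE; apply/idP/familyP.
    by move=> h j; rewrite /F; case: eqP => [->|].
  by move/(_ i); rewrite /F eqxx.
rewrite card_family foldrE big_map big_enum /= (bigD1 i) //= /F eqxx.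
congr (_ * _)%N; rewrite (eq_bigr (fun=> k.+1)); last first.
  by move=> j /negbTE ->; rewrite cardT size_enum_ord.
by rewrite prod_nat_const cardC1 card_ord.
Qed.

Lemma card_shifted_out_of_range k (z : int) :
  (#|[pred a : 'I_k.+1 | ~~ (0 <= (a : nat)%:Z - z < (k.+1)%:Z)%R]| <= 2 * `|z|)%N.
Proof.
rewrite cardE -(size_map val) mul2n -addnn.
have -> : (`|z| + `|z| = size (iota 0 `|z| ++ iota (k.+1 - `|z|) `|z|))%N.
  by rewrite size_cat !size_iota.
apply: uniq_leq_size; first by rewrite map_inj_uniq ?enum_uniq //; apply: val_inj.
move=> x /mapP [a]; rewrite mem_enum inE => ha ->.
by rewrite mem_cat !mem_iota; case: a ha => n hn /= ha; lia.
Qed.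

Section Boxes.
Variable m : nat.

Definition box_point k (f : {ffun 'I_m -> 'I_k.+1}) : Zm m := \row_i ((f i : nat)%:Z).

Definition box k : seq (Zm m) := map (@box_point k) (enum {ffun 'I_m -> 'I_k.+1}).

Lemma box_point_inj k : injective (@box_point k).
Proof.
move=> f f' e; apply/ffunP => i; apply: val_inj.
by have := congr1 (fun y : Zm m => y ord0 i) e; rewrite !mxE => -[].
Qed.

Lemma box_uniq k : uniq (box k).
Proof. by rewrite map_inj_uniq ?enum_uniq //; apply: box_point_inj. Qed.

Lemma size_box k : size (box k) = (k.+1 ^ m)%N.
Proof. by rewrite size_map -cardT card_ffun !card_ord. Qed.

Lemma mem_box k y : (y \in box k) = [forall i, 0 <= y ord0 i < (k.+1)%:Z].
Proof.
apply/idP/forallP => [/mapP [f _ ->] i | h].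
  by rewrite mxE ltz_nat ltn_ord.
pose f := [ffun i => (inord `|y ord0 i| : 'I_k.+1)].
have -> : y = box_point f.
  apply/rowP => i; rewrite !mxE ffunE; have /andP [h1 h2] := h i.
  by rewrite inordK ?gez0_abs // -ltz_nat gez0_abs.
by apply: map_f; rewrite mem_enum.
Qed.

(* A point of the box leaves it under translation by [-g] only if one coordinate lies
   in a slab of width [|g_i|] at a face; there are at most [2 |g_i| (k+1)^(m-1)] such. *)
Lemma box_translate_deficit k (g : Zm m) : (1 <= m)%N ->
  (k.+1 * (size (box k) - count (fun x => (x - g)%R \in box k) (box k))
    <= (\sum_(i <- enum 'I_m) 2 * `|g ord0 i|) * size (box k))%N.
Proof.
move=> hm; rewrite {1 2}/box count_map size_map.
set E := enum _; set a := preim _ _.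
rewrite -(count_predC a E) addKn.
pose bad i (f : {ffun 'I_m -> 'I_k.+1}) :=
  ~~ (0 <= (f i : nat)%:Z - g ord0 i < (k.+1)%:Z).
have hcover : (count (predC a) E <= \sum_(i <- enum 'I_m) count (bad i) E)%N.
  apply: count_le_sum_cover => f _; rewrite /= /a /= mem_box negb_forall.
  by case/existsP => i hi; exists i; rewrite ?mem_enum // /bad; move: hi; rewrite !mxE.
have hbad i : (count (bad i) E <= 2 * `|g ord0 i| * k.+1 ^ m.-1)%N.
  have := card_ffun_coord i [pred a : 'I_k.+1 | ~~ (0 <= (a : nat)%:Z - g ord0 i < (k.+1)%:Z)].
  rewrite cardE /enum_mem size_filter /enum_mem count_filter.
  rewrite (@eq_count _ _ (bad i)) => [->|f]; last by rewrite !inE andbT.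
  by rewrite leq_mul2r card_shifted_out_of_range orbT.
have hsize : (size (box k) = k.+1 * k.+1 ^ m.-1)%N by rewrite size_box -expnS prednK.
rewrite /box size_map in hsize.
rewrite count_predC /E hsize mulnCA leq_mul2l; apply/orP; right.
apply: leq_trans hcover _; rewrite big_distrl /=.
by apply: leq_sum => i _; apply: hbad.
Qed.

Lemma Folner_translated_boxes (t : nat -> Zm m) : (1 <= m)%N ->
  Folner (fun k => map (fun x => x + t k) (box k)).
Proof.
move=> hm; split.
  move=> k; rewrite map_inj_uniq ?box_uniq; last exact: addIr.
  by rewrite size_map size_box expn_gt0.
move=> g.
have e k : count (fun x => x - g \in map (fun x => x + t k) (box k))
    (map (fun x => x + t k) (box k)) = count (fun x => x - g \in box k) (box k).
  rewrite count_map; apply: eq_count => x /=.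
  by rewrite addrAC (mem_map (addIr (t k))).
have -> : (fun k => Rdiv (INR (count (fun x => x - g \in map (fun x => x + t k) (box k))
      (map (fun x => x + t k) (box k)))) (INR (size (map (fun x => x + t k) (box k)))))
    = (fun k => Rdiv (INR (count (fun x => x - g \in box k) (box k))) (INR (size (box k)))).
  by apply: functional_extensionality => k; rewrite e size_map.
apply: (ratio_cvg1 (S := fun k => size (box k))
  (C := \sum_(i <- enum 'I_m) 2 * `|g ord0 i|)%N).
- by move=> k; rewrite size_box expn_gt0.
- by move=> k; apply: count_size.
- by move=> k; apply: box_translate_deficit.
Qed.

End Boxes.

Lemma count_translate_le (V : zmodType) (F : seq V) (P : pred V) (r : V) : uniq F ->
  (count (fun x => P (x - r)%R) F
    <= count P F + (size F - count (fun x => (x - r)%R \in F) F))%N.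
Proof.
move=> hu; rewrite -(count_predC (fun x => x - r \in F) F) addKn.
pose inF x := (x - r \in F) && P (x - r).
have hsplit : (count (fun x => P (x - r)%R) F
    <= count inF F + count (predC (fun x => (x - r)%R \in F)) F)%N.
  rewrite -count_predUI; apply: leq_trans (leq_addr _ _).
  by apply: sub_count => x /= hx; rewrite /inF hx; case: (_ \in F).
apply: leq_trans hsplit _; rewrite leq_add2r.
rewrite -size_filter -(size_map (fun x => x - r)) -size_filter.
apply: uniq_leq_size; first by rewrite map_inj_uniq ?filter_uniq //; apply: addIr.
move=> y /mapP [x]; rewrite mem_filter => /andP [/andP [h1 h2] _] ->.
by rewrite mem_filter h2 h1.
Qed.

(* Counting the translates [F :&: (r + P)] over coset representatives [r]: they cover
   [F], and each has at most [count P F] points plus the points of [F] moved out by [-r]. *)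
Lemma coset_count_lower_bound (V : zmodType) (F s : seq V) (P : pred V) : uniq F ->
  (forall x, exists2 r, r \in s & P (x - r)) ->
  (forall r, r \in s ->
    2 * size s * (size F - count (fun x => (x - r)%R \in F) F) < size F)%N ->
  (size F <= 2 * size s * count P F)%N.
Proof.
move=> hu hcov hinv.
set N := size s; set S := size F; set p := count P F.
have N_gt0 : (0 < N)%N by have [r] := hcov 0; rewrite /N; case: (s).
have sum_const c : (\sum_(r <- s) c = N * c)%N.
  by rewrite big_const_seq count_predT iter_addn_0 mulnC.
set D := (\sum_(r <- s) (S - count (fun x => (x - r)%R \in F) F))%N.
have hS : (S <= N * p + D)%N.
  rewrite /S -(count_predT F).
  apply: leq_trans (count_le_sum_cover (b := fun r x => P (x - r)) (s := s) _) _.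
    by move=> x _ _; apply: hcov.
  rewrite -sum_const /D -big_split /=.
  by apply: leq_sum => r _; apply: count_translate_le.
have hD : (2 * N * D <= N * S)%N.
  rewrite /D big_distrr /= -sum_const big_seq [X in (_ <= X)%N]big_seq.
  by apply: leq_sum => r hr; apply/ltnW/hinv.
have : (N * S <= N * (2 * N * p))%N by nia.
by rewrite leq_pmul2l.
Qed.

Lemma Folner_eventually_almost_invariant m (F : nat -> seq (Zm m)) (N : nat) (s : seq (Zm m)) :
  (0 < N)%N -> Folner F -> exists K0, forall k, (K0 <= k)%N -> forall r, r \in s ->
    (2 * N * (size (F k) - count (fun x => (x - r)%R \in F k) (F k)) < size (F k))%N.
Proof.
move=> N_gt0 [hF hinv]; elim: s => [|r s [K0 hK0]]; first by exists 0%N.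
have heps : Rgt (Rinv (Rmult (IZR 2) (INR N))) (IZR 0).
  by apply/Rinv_0_lt_compat/Rmult_lt_0_compat; [lra | apply: (lt_INR 0); apply/ltP].
have [K1 hK1] := hinv r _ heps.
exists (maxn K0 K1) => k; rewrite geq_max => /andP [hk0 hk1] r'.
rewrite inE => /predU1P [->|]; last exact: hK0.
have [uF F_gt0] := hF k.
apply: deficit_lt_of_ratio_close => //; first exact: count_size.
exact/hK1/leP.
Qed.

Lemma limsup_density_le1 m (A : Zm m -> Prop) F l :
  Folner F -> is_limsup (density_ratio A F) l -> Rle l (IZR 1).
Proof.
move=> [hF _] [_ hl]; apply: Rnot_lt_le => l_gt1.
have [n [_ hn]] := hl (Rminus l (IZR 1)) ltac:(lra) 0%N.
have [_ F_gt0] := hF n.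
have : Rle (density_ratio A F n) (IZR 1) by apply: ratio_le1 => //; apply: count_size.
lra.
Qed.

Section UpperDensity.
Variables (m : nat) (Lam : nat -> Zm m -> Prop).
Hypothesis Lam_lattice : forall i, is_lattice (Lam i).

(* Boxes of growing side, each translated to lie entirely inside [multiples Lam]. *)
Lemma no_free_coset_upper_density : (1 <= m)%N ->
  no_free_coset Lam -> upper_banach_density (multiples Lam) (IZR 1).
Proof.
move=> hm no_free.
pose inM k t := forall w, w \in box m k -> multiples Lam (t + w).
pose t k := epsilon (inhabits 0) (inM k).
have ht k : inM k (t k).
  exact: epsilon_spec (window_multiples Lam_lattice no_free (box m k)).
pose F k := map (fun x => x + t k) (box m k).
have hF : Folner F := Folner_translated_boxes t hm.
have ratio1 k : density_ratio (multiples Lam) F k = IZR 1.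
  rewrite /density_ratio.
  have -> : count (fun x => pbool (multiples Lam x)) (F k) = size (F k).
    apply/eqP; rewrite -all_count; apply/allP => x /mapP [w hw ->].
    by apply/pboolT; rewrite addrC; apply: ht.
  have [_ F_gt0] := proj1 hF k.
  by apply/Rdiv_diag/not_0_INR/eqP; rewrite -lt0n.
split=> [l [F' [hF' hl]] | b hb]; first exact: limsup_density_le1 hl.
apply: hb; exists F; split => //; split => eps heps.
  by exists 0%N => n _; rewrite ratio1; lra.
by move=> N; exists N; split => //; rewrite ratio1; lra.
Qed.

(* A free coset [n + L] takes up at least [1 / (2 [Z^m : L])] of an almost invariant [F_k],
   which bounds the density of [multiples Lam] away from 1. *)
Lemma upper_density_no_free_coset :
  upper_banach_density (multiples Lam) (IZR 1) -> no_free_coset Lam.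
Proof.
move=> [_ hleast] n L hL hfree.
have [_ [s hs]] := hL.
have s_gt0 : (0 < size s)%N by have [r] := hs 0; case: (s).
have inv_gt0 : Rlt (IZR 0) (Rinv (Rmult (IZR 2) (INR (size s)))).
  by apply/Rinv_0_lt_compat/Rmult_lt_0_compat; [lra | apply: (lt_INR 0); apply/ltP].
pose b := Rminus (IZR 1) (Rinv (Rmult (IZR 2) (INR (size s)))).
suff hub : is_upper_bound
    (fun l => exists F, Folner F /\ is_limsup (density_ratio (multiples Lam) F) l) b.
  by have := hleast b hub; rewrite /b; lra.
move=> l [F [hF hl]]; apply: Rnot_lt_le => hlb.
have [K0 hK0] := Folner_eventually_almost_invariant s s_gt0 hF.
have [k [hk hk2]] := proj2 hl (Rminus l b) ltac:(lra) K0.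
suff : Rle (density_ratio (multiples Lam) F k) b by lra.
have [uF F_gt0] := proj1 hF k.
pose P x := pbool (L (x - n)).
have hP : (size (F k) <= 2 * size s * count P (F k))%N.
  apply: coset_count_lower_bound => // [x | r rs]; last exact: hK0.
  by have [r rs hr] := hs (x - n); exists r => //; apply/pboolT; rewrite addrAC.
have hdisj x : pbool (multiples Lam x) && P x = false.
  apply/negbTE/negP => /andP [/pboolT hM /pboolT hx].
  by apply: (hfree _ hx); rewrite subrKC.
have hcount : (count (fun x => pbool (multiples Lam x)) (F k) + count P (F k)
    <= size (F k))%N.
  have := count_predUI (fun x => pbool (multiples Lam x)) P (F k).
  rewrite (@eq_count _ (predI _ _) pred0 hdisj) count_pred0 addn0 => <-.
  exact: count_size.
rewrite /density_ratio /b; apply: ratio_le_of_deficit => //.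
apply: leq_trans (leq_add (leqnn _) hP) _.
by rewrite -mulnDr leq_mul2l hcount orbT.
Qed.

End UpperDensity.

Unset Implicit Arguments.

Theorem theorem5p3 (m : nat) (Lam : nat -> 'rV[int]_m -> Prop)
  (hm : (1 <= m)%N)
  (hLam : forall i, proper_lattice (Lam i))
  (hdist : forall i j, i <> j -> ~ (forall x, Lam i x <-> Lam j x)) :
  let MB : 'rV[int]_m -> Prop := fun x => exists i, Lam i x in
  let FB : 'rV[int]_m -> Prop := fun x => ~ MB x in
  let eta : 'rV[int]_m -> bool := fun g => pbool (FB g) in
  let Xeta := orbit_closure eta in
  let a := proximal Xeta in
  let b := Xeta (fun _ => false) in
  let c := forall (k : nat) (L : 'I_k -> 'rV[int]_m -> Prop),
             (1 <= k)%N -> (forall j, is_lattice (L j)) ->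
             (exists x, forall j, ~ L j x) ->
             ~ (forall x, MB x -> exists j, L j x) in
  let d := exists phi : nat -> nat, injective phi /\
             forall i j, i <> j -> coprime_lat (Lam (phi i)) (Lam (phi j)) in
  let e := forall (n : 'rV[int]_m) (L : 'rV[int]_m -> Prop),
             is_lattice L -> ~ (forall l, L l -> FB (n + l)) in
  let f := upper_banach_density MB (IZR 1) in
  (d -> a) /\ (a <-> b) /\ (a <-> c) /\ (a <-> e) /\ (a <-> f).
Proof.
move=> MB FB eta Xeta a b c d e f.
have Lam_lattice i : is_lattice (Lam i) by case: (hLam i).
have ha : a <-> no_free_coset Lam.
  split; first exact: proximal_no_free_coset.
  by move=> no_free; apply: no_free_coset_proximal.
have hb : b <-> no_free_coset Lam := orbit_closure_zeroP Lam_lattice.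
have hc : c <-> no_free_coset Lam := uncoverable_by_latticesP Lam_lattice.
have hd : d -> no_free_coset Lam := coprime_subfamily_no_free_coset Lam_lattice.
have he : e <-> no_free_coset Lam by [].
have hf : f <-> no_free_coset Lam.
  split; first exact: upper_density_no_free_coset.
  exact: no_free_coset_upper_density.
tauto.
Qed.
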